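(* Let $n$ be a nonnegative integer. Suppose there exist a nonnegative integer $B$ and integers $x,y,z$ such that $3\mid n+B$ and $$\frac23(n+B)+B-5B^2=x^2+y^2+z^2+\frac{(x+y+z)^2}{2}\le B^2.$$ Then there exist nonnegative integers $x_0,y_0,z_0,w_0$ with $n=p_5(x_0)+p_5(y_0)+p_5(z_0)+2p_5(w_0)$.
   Context: For $k\in\mathbb{Z}$, $p_5(k)=k(3k-1)/2$. *)

From Stdlib Require Import ZArith QArith.
Open Scope Z_scope.
Definition p5 (k : Z) : Z := k * (3 * k - 1) / 2.

(* Clearing denominators, the hypothesis reads
   2n + 5B - 15B^2 = 3(x^2+y^2+z^2) + (3/2)s^2  with  s = x + y + z,
   so s = 2t is even, and expanding 2 p5 k = k(3k-1) shows
   2 (p5(B+x) + p5(B+y) + p5(B+z) + 2 p5(B-t)) = 15B^2 - 5B + 3(x^2+y^2+z^2) + 6t^2 = 2n.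
   The inequality bounds x^2, y^2, z^2, t^2 by B^2, so all four arguments are nonnegative. *)

From Stdlib Require Import ZArith QArith Lia.
Local Open Scope Z_scope.

Ltac unfold_Q_arith :=
  cbn [Qnum Qden Qmult Qplus Qminus Qopp Qdiv Qinv Qpower Qpower_positive
       pow_pos inject_Z Pos.mul].

Lemma Qeq_cleared (n B x y z s : Z) :
  ((2 # 3) * inject_Z (n + B) + inject_Z B - 5 * inject_Z B ^ 2
     == inject_Z x ^ 2 + inject_Z y ^ 2 + inject_Z z ^ 2 + inject_Z s ^ 2 / 2)%Q ->
  4 * (n + B) + 6 * B - 30 * B ^ 2 = 6 * (x ^ 2 + y ^ 2 + z ^ 2) + 3 * s ^ 2.
Proof. unfold Qeq; unfold_Q_arith; lia. Qed.

Lemma Qle_cleared (B x y z s : Z) :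
  (inject_Z x ^ 2 + inject_Z y ^ 2 + inject_Z z ^ 2 + inject_Z s ^ 2 / 2
     <= inject_Z B ^ 2)%Q ->
  2 * (x ^ 2 + y ^ 2 + z ^ 2) + s ^ 2 <= 2 * B ^ 2.
Proof. unfold Qle; unfold_Q_arith; lia. Qed.

Lemma Even_of_Even_mul_sqr (a s : Z) : Z.Odd a -> Z.Even (a * s ^ 2) -> Z.Even s.
Proof.
  rewrite <- !Z.even_spec, <- Z.odd_spec, Z.even_mul, Z.even_pow by lia.
  now rewrite <- Z.negb_odd; intros ->.
Qed.

Lemma p5_double (k : Z) : 2 * p5 k = k * (3 * k - 1).
Proof.
  unfold p5.
  destruct (Z_modulo_2 k) as [[m ->] | [m ->]].
  - replace (2 * m * (3 * (2 * m) - 1)) with (m * (6 * m - 1) * 2) by ring.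
    rewrite Z.div_mul by lia; ring.
  - replace ((2 * m + 1) * (3 * (2 * m + 1) - 1)) with ((2 * m + 1) * (3 * m + 1) * 2) by ring.
    rewrite Z.div_mul by lia; ring.
Qed.

Lemma double_p5_shifted_sum (B x y z t : Z) : x + y + z = 2 * t ->
  2 * (p5 (B + x) + p5 (B + y) + p5 (B + z) + 2 * p5 (B - t))
  = 15 * B ^ 2 - 5 * B + 3 * (x ^ 2 + y ^ 2 + z ^ 2) + 6 * t ^ 2.
Proof.
  intros Hs.
  rewrite !Z.mul_add_distr_l, !p5_double.
  replace z with (2 * t - x - y) by lia; ring.
Qed.

Lemma sqr_le_of_bound (B x y z t : Z) :
  2 * (x ^ 2 + y ^ 2 + z ^ 2) + (2 * t) ^ 2 <= 2 * B ^ 2 ->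
  x ^ 2 <= B ^ 2 /\ y ^ 2 <= B ^ 2 /\ z ^ 2 <= B ^ 2 /\ t ^ 2 <= B ^ 2.
Proof.
  pose proof (Z.square_nonneg x); pose proof (Z.square_nonneg y).
  pose proof (Z.square_nonneg z); pose proof (Z.square_nonneg t).
  rewrite !Z.pow_2_r. lia.
Qed.

Lemma shift_nonneg_of_sqr_le (B x : Z) : 0 <= B -> x ^ 2 <= B ^ 2 -> 0 <= B + x /\ 0 <= B - x.
Proof. intros; nia. Qed.

Theorem lemma2p2 (n : Z) (Hn : (0 <= n)%Z) :
  (exists (B x y z : Z), (0 <= B)%Z /\ (3 | n + B)%Z /\
     ((2 # 3) * inject_Z (n + B) + inject_Z B - 5 * inject_Z B ^ 2
        == inject_Z x ^ 2 + inject_Z y ^ 2 + inject_Z z ^ 2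
           + inject_Z (x + y + z) ^ 2 / 2)%Q /\
     (inject_Z x ^ 2 + inject_Z y ^ 2 + inject_Z z ^ 2
        + inject_Z (x + y + z) ^ 2 / 2 <= inject_Z B ^ 2)%Q) ->
  exists (x0 y0 z0 w0 : Z), (0 <= x0)%Z /\ (0 <= y0)%Z /\ (0 <= z0)%Z /\ (0 <= w0)%Z /\
    n = (p5 x0 + p5 y0 + p5 z0 + 2 * p5 w0)%Z.
Proof.
  intros [B [x [y [z [HB [_ [Heq Hle]]]]]]].
  apply Qeq_cleared in Heq; apply Qle_cleared in Hle.
  assert (Hs : Z.Even (x + y + z)).
  { apply (Even_of_Even_mul_sqr 3); [exists 1; lia |].
    exists (2 * (n + B) + 3 * B - 15 * B ^ 2 - 3 * (x ^ 2 + y ^ 2 + z ^ 2)); lia. }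
  destruct Hs as [t Ht]; rewrite Ht in Heq, Hle.
  destruct (sqr_le_of_bound B x y z t Hle) as [Hx [Hy [Hz Ht2]]].
  apply shift_nonneg_of_sqr_le in Hx, Hy, Hz, Ht2; try assumption.
  exists (B + x), (B + y), (B + z), (B - t).
  repeat split; try tauto.
  pose proof (double_p5_shifted_sum B x y z t Ht); lia.
Qed.
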